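(* Let $b_1,\dots,b_n\in\textsc{Xos}$ be valuations over $m$ items. Then for any partition $\mathbf{x}_1,\dots,\mathbf{x}_n\in\{0,1\}^m$ of the items (i.e. $\sum_i\mathbf{x}_i=\mathbf{1}$), $$\sum_i W^{\mathbf{b}_{-i}}(\mathbf{x}_i\mid\mathbf{1}-\mathbf{x}_i)\le 2\,W^{\mathbf{b}}(\mathbf{1}).$$
   Context: A valuation is $v:\{0,1\}^m\to\mathbb{R}_+$ with $v(\mathbf{0})=0$ and monotone; it is extended to $\mathbb{Z}^m_+$ by $v(\mathbf{x})=v(\min(\mathbf{x},\mathbf{1}))$. $v\in\textsc{Xos}$ if there is a set $I$ and vectors $\{\mathbf{w}_k\}_{k\in I}\subseteq\mathbb{R}^m_+$ with $v(\mathbf{x})=\max_{k\in I}\mathbf{w}_k\cdot\mathbf{x}$. For $\mathbf{x}\in\mathbb{Z}^m_+$: $W^{\mathbf{b}}(\mathbf{x})=\max\{\sum_k b_k(\mathbf{y}_k):\sum_k\mathbf{y}_k\le\mathbf{x},\mathbf{y}_k\in\{0,1\}^m\}$ and $W^{\mathbf{b}_{-i}}(\mathbf{x})=\max\{\sum_{k\ne i}b_k(\mathbf{y}_k):\sum_{k\ne i}\mathbf{y}_k\le\mathbf{x},\mathbf{y}_k\in\{0,1\}^m\}$. For a function $f$ on $\mathbb{Z}^m_+$, $f(\mathbf{y}\mid\mathbf{x})=f(\mathbf{y}+\mathbf{x})-f(\mathbf{x})$. *)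

From HB Require Import structures.
From mathcomp Require Import all_boot all_order all_algebra.
Set Implicit Arguments. Unset Strict Implicit. Unset Printing Implicit Defensive.
Import Order.TTheory GRing.Theory Num.Theory.
Local Open Scope ring_scope.

(* Items are 'I_m.  A 0/1 vector in {0,1}^m is identified with the set of its
   1-coordinates, a {set 'I_m}; a vector in Z^m_+ is a function 'I_m -> nat. *)

Definition valuation (R : realFieldType) (m : nat) (v : {set 'I_m} -> R) : Prop :=
  [/\ v set0 = 0, (forall S : {set 'I_m}, 0 <= v S) & (forall S T : {set 'I_m}, S \subset T -> v S <= v T)].

(* XOS: v(x) = max_{k in I} w_k . x  for some family of nonnegative vectors. *)
Definition xos (R : realFieldType) (m : nat) (v : {set 'I_m} -> R) : Prop :=
  valuation v /\
  exists (I : Type) (w : I -> 'I_m -> R),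
    (forall k j, 0 <= w k j) /\
    forall S : {set 'I_m},
      (forall k, \sum_(j in S) w k j <= v S) /\ (exists k, v S = \sum_(j in S) w k j).

(* W^b(x) = max { sum_k b_k(y_k) : sum_k y_k <= x, y_k in {0,1}^m }.
   All values are >= 0 and y = 0 is feasible, so a max with neutral 0 is exact. *)
Definition W (R : realFieldType) (n m : nat) (b : 'I_n -> {set 'I_m} -> R)
    (x : 'I_m -> nat) : R :=
  \big[Num.max/0]_(y : {ffun 'I_n -> {set 'I_m}} |
        [forall j, (\sum_(k < n) (j \in y k) <= x j)%N])
     \sum_(k < n) b k (y k).

Definition Wminus (R : realFieldType) (n m : nat) (b : 'I_n -> {set 'I_m} -> R)
    (i : 'I_n) (x : 'I_m -> nat) : R :=
  \big[Num.max/0]_(y : {ffun 'I_n -> {set 'I_m}} |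
        [forall j, (\sum_(k < n | k != i) (j \in y k) <= x j)%N])
     \sum_(k < n | k != i) b k (y k).

Definition marg (R : realFieldType) (m : nat) (f : ('I_m -> nat) -> R)
    (y x : 'I_m -> nat) : R :=
  f (fun j => (y j + x j)%N) - f x.

From mathcomp Require Import all_boot all_order all_algebra.
Import Order.TTheory GRing.Theory Num.Theory.
Set Implicit Arguments. Unset Strict Implicit.
Local Open Scope ring_scope.

(* Fix an optimal allocation y of all items and, for each bidder k, an
   additive XOS clause a_k supporting b_k at y_k, so OPT = sum_k a_k(y_k).
   Without bidder i and without the items of x_i, the other bidders can still
   take y_k \ x_i, so W^{b_-i}(1 - x_i) is at least their a-value; as
   W^{b_-i}(1) <= OPT, the marginal value of x_i is at most a_i(y_i) plus the
   a-value of the items of x_i inside y.  Summed over the partition x, both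
   parts add up to OPT. *)

Lemma xos_supporting_clause (R : realFieldType) m (v : {set 'I_m} -> R)
    (S : {set 'I_m}) :
  xos v -> exists a : 'I_m -> R,
    [/\ forall j, 0 <= a j, forall T : {set 'I_m}, \sum_(j in T) a j <= v T
      & v S = \sum_(j in S) a j].
Proof.
case=> _ [I [w [w_ge0 w_supp]]]; have [_ [k vS]] := w_supp S.
by exists (w k); split=> // T; case: (w_supp T).
Qed.

Lemma sum_partition_of_unity (R : realFieldType) n m
    (x : 'I_n -> 'I_m -> nat) (f : 'I_m -> R) (Y : {set 'I_m}) :
  (forall j, (\sum_(i < n) x i j)%N = 1%N) ->
  \sum_(i < n) \sum_(j in Y) (x i j)%:R * f j = \sum_(j in Y) f j.
Proof.
move=> x_part; rewrite exchange_big; apply: eq_bigr => j _.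
by rewrite -mulr_suml -natr_sum x_part mul1r.
Qed.

Lemma sum_split_01_weight (R : realFieldType) m (f : 'I_m -> R)
    (xi : 'I_m -> nat) (Y : {set 'I_m}) :
  (forall j, (xi j <= 1)%N) ->
  \sum_(j in Y) f j =
    \sum_(j in Y :&: [set j | xi j == 0%N]) f j + \sum_(j in Y) (xi j)%:R * f j.
Proof.
move=> xi_le1; set S := [set j | xi j == 0%N].
rewrite [LHS](big_setID S) [X in _ = _ + X](big_setID S) /=; congr (_ + _).
rewrite [X in _ = X + _]big1 ?add0r => [|j]; last first.
  by rewrite !inE => /andP[_ /eqP ->]; rewrite mul0r.
apply: eq_bigr => j; rewrite !inE => /andP[/negPf xj_neq0 _].
by have := xi_le1 j; case: (xi j) xj_neq0 => [|[|]] // _ _; rewrite mul1r.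
Qed.

Section Allocations.
Variables (R : realFieldType) (n m : nat) (b : 'I_n -> {set 'I_m} -> R).

Lemma W_optimal_allocation s :
  (forall k S, 0 <= b k S) ->
  exists2 y : {ffun 'I_n -> {set 'I_m}},
    forall j, (\sum_(k < n) (j \in y k) <= s j)%N
    & W b s = \sum_(k < n) b k (y k).
Proof.
move=> b_ge0.
have empty_feasible : [forall j, (\sum_(k < n) (j \in [ffun=> set0] k) <= s j)%N].
  by apply/forallP => j; rewrite big1 // => k _; rewrite ffunE inE.
rewrite /W (bigmax_eq_arg _ _ _ _ empty_feasible) => [|y _]; last exact: sumr_ge0.
by case: arg_maxP => // y /forallP y_feas _; exists y.
Qed.

Lemma Wminus_le_W i s t :
  (forall k, b k set0 = 0) -> (forall j, (s j <= t j)%N) ->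
  Wminus b i s <= W b t.
Proof.
move=> b0 le_st; apply: bigmax_le => [|y /forallP y_feas]; first exact: bigmax_ge_id.
pose y' := [ffun k => if k == i then set0 else y k].
have -> : \sum_(k < n | k != i) b k (y k) = \sum_(k < n) b k (y' k).
  rewrite [RHS](bigD1 i) //= ffunE eqxx b0 add0r.
  by apply: eq_bigr => k /negbTE ki; rewrite ffunE ki.
apply: le_bigmax_cond; apply/forallP => j.
rewrite (bigD1 i) //= ffunE eqxx inE add0n.
under eq_bigr => k ki do rewrite ffunE (negbTE ki).
exact: leq_trans (y_feas j) (le_st j).
Qed.

Lemma Wminus_ge_restricted_sum (i : 'I_n) s (S : {set 'I_m})
    (y : {ffun 'I_n -> {set 'I_m}}) (a : 'I_n -> 'I_m -> R) :
  (forall j, (\sum_(k < n) (j \in y k) <= 1)%N) ->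
  (forall j, j \in S -> (0 < s j)%N) ->
  (forall k (T : {set 'I_m}), \sum_(j in T) a k j <= b k T) ->
  \sum_(k < n | k != i) \sum_(j in y k :&: S) a k j <= Wminus b i s.
Proof.
move=> y_alloc s_pos a_le_b.
pose y' := [ffun k => y k :&: S].
have y'_feas : [forall j, (\sum_(k < n | k != i) (j \in y' k) <= s j)%N].
  apply/forallP => j; case: (boolP (j \in S)) => [jS | jNS].
    apply: leq_trans (s_pos j jS); apply: leq_trans (y_alloc j).
    rewrite [leqRHS](bigID (fun k => k != i)) /=; apply: leq_trans (leq_addr _ _).
    by apply: leq_sum => k _; rewrite ffunE inE jS andbT.
  by rewrite big1 // => k _; rewrite ffunE inE (negbTE jNS) andbF.
apply: le_trans (le_bigmax_cond _ _ y'_feas).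
by apply: ler_sum => k _; rewrite ffunE.
Qed.

End Allocations.

Section SupportingClauses.
Variables (R : realFieldType) (n m : nat) (b : 'I_n -> {set 'I_m} -> R).
Variables (y : {ffun 'I_n -> {set 'I_m}}) (a : 'I_n -> 'I_m -> R).
Hypotheses (b0 : forall k, b k set0 = 0)
  (y_alloc : forall j, (\sum_(k < n) (j \in y k) <= 1)%N)
  (a_ge0 : forall k j, 0 <= a k j)
  (a_le_b : forall k (T : {set 'I_m}), \sum_(j in T) a k j <= b k T)
  (W_supported : W b (fun _ => 1%N) = \sum_(k < n) \sum_(j in y k) a k j).

Lemma marg_Wminus_le (i : 'I_n) (xi : 'I_m -> nat) :
  (forall j, (xi j <= 1)%N) ->
  marg (Wminus b i) xi (fun j => (1 - xi j)%N) <=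
    \sum_(j in y i) a i j + \sum_(k < n) \sum_(j in y k) (xi j)%:R * a k j.
Proof.
move=> xi_le1; set S := [set j | xi j == 0%N].
have Wminus_all : Wminus b i (fun j => (xi j + (1 - xi j))%N) <= W b (fun _ => 1%N).
  by apply: Wminus_le_W => // j; rewrite subnKC.
have Wminus_rest : \sum_(k < n | k != i) \sum_(j in y k :&: S) a k j
    <= Wminus b i (fun j => (1 - xi j)%N).
  apply: Wminus_ge_restricted_sum => // j; rewrite inE => /eqP ->.
  by rewrite subn0.
apply: le_trans (lerB Wminus_all Wminus_rest) _.
rewrite W_supported lerBlDl addrA.
under eq_bigr => k _ do rewrite (sum_split_01_weight (a k) _ xi_le1).
rewrite big_split /= lerD2r (bigD1 i) //= addrC lerD2l.
rewrite (sum_split_01_weight (a i) (y i) xi_le1) lerDl.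
by apply: sumr_ge0 => j _; apply: mulr_ge0.
Qed.

Lemma sum_marg_Wminus_le (x : 'I_n -> 'I_m -> nat) :
  (forall i j, (x i j <= 1)%N) -> (forall j, (\sum_(i < n) x i j)%N = 1%N) ->
  \sum_(i < n) marg (Wminus b i) (x i) (fun j => (1 - x i j)%N)
    <= 2 * W b (fun _ => 1%N).
Proof.
move=> x_le1 x_part.
apply: le_trans (ler_sum _ (fun i _ => marg_Wminus_le i (x_le1 i))) _.
rewrite big_split /= exchange_big /=.
under [X in _ + X <= _]eq_bigr => k _ do rewrite sum_partition_of_unity //.
by rewrite -W_supported mulr_natl mulr2n.
Qed.

End SupportingClauses.

Theorem lemma3 (R : realFieldType) (n m : nat)
    (b : 'I_n -> {set 'I_m} -> R) (x : 'I_n -> 'I_m -> nat) :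
  (forall i, xos (b i)) ->
  (forall i j, (x i j <= 1)%N) ->
  (forall j, (\sum_(i < n) x i j)%N = 1%N) ->
  \sum_(i < n) marg (Wminus b i) (x i) (fun j => (1 - x i j)%N)
    <= 2 * W b (fun _ => 1%N).
Proof.
move=> b_xos x_le1 x_part.
have b0 k : b k set0 = 0 by case: (b_xos k) => [[]].
have b_ge0 k S : 0 <= b k S by case: (b_xos k) => [[]].
have [y y_alloc W_y] := W_optimal_allocation (fun _ => 1%N) b_ge0.
have /fin_all_exists [a a_supp] k := xos_supporting_clause (y k) (b_xos k).
apply: (sum_marg_Wminus_le (a := a) b0 y_alloc _ _ _ x_le1 x_part).
- by move=> k j; case: (a_supp k).
- by move=> k T; case: (a_supp k).
- by rewrite W_y; apply: eq_bigr => k _; case: (a_supp k).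
Qed.
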